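(* Suppose $f$ is log-concave and symmetric about its mean, let $t\ge0$, and let $\delta$ be any non-null classifier. Let $\gamma_\mu$ be the median cost. Then the median individual's payoff from reward $r_1^*=k_1/\rho$ when complying, $-\gamma_\mu+k_1(1-F(k_1))+tF(k_1)$, is at least as high as the median individual's payoff from reward $r_0^*=k_0/\rho$ when not complying, $-k_0F(k_0)+tF(k_0)$, if and only if $\gamma_\mu\le t$.
   Context: Costs $\gamma_i\in\mathbb{R}$ of compliance are distributed according to a continuously differentiable CDF $F$ with density $f$ of full support on $\mathbb{R}$; $\gamma_\mu$ satisfies $F(\gamma_\mu)=\tfrac12$. A classifier $\delta=(\delta_1,\delta_0)\in[0,1]^2$ has responsiveness $\rho=(\delta_1+\delta_0-1)(2\phi-1)$ with $\phi\in(\tfrac12,1]$, non-null meaning $\rho\neq0$. Individuals with $d_i=1$ receive reward $r$, financed by an equal tax (budget balance), and each gets $t$ times the compliance rate $F(r\rho)$. Conditional payoffs from reward $r$: complying, $-\gamma_i+r\rho(1-F(r\rho))+tF(r\rho)$; not complying, $-r\rho F(r\rho)+tF(r\rho)$. The numbers $k_0,k_1$ are defined by $k_0=t-\frac{F(k_0)}{f(k_0)}$ and $k_1=t+\frac{1-F(k_1)}{f(k_1)}$, so $r_1^*$ and $r_0^*$ are the maximizers of the complying and non-complying conditional payoffs respectively. *)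

From Stdlib Require Import Reals.
From Coquelicot Require Import Coquelicot.
Open Scope R_scope.

Definition is_cdf_with_density (F f : R -> R) : Prop :=
  (forall x, is_derive F x (f x)) /\
  (forall x, continuous f x) /\
  (forall x, 0 < f x) /\
  (forall x y, x <= y -> F x <= F y) /\
  is_lim F m_infty 0 /\
  is_lim F p_infty 1.

Definition log_concave (f : R -> R) : Prop :=
  forall x y l, 0 <= l <= 1 ->
    l * ln (f x) + (1 - l) * ln (f y) <= ln (f (l * x + (1 - l) * y)).

Definition is_mean (f : R -> R) (m : R) : Prop :=
  is_RInt_gen (fun x => x * f x) (Rbar_locally m_infty) (Rbar_locally p_infty) m.

Definition symmetric_about_mean (f : R -> R) : Prop :=
  exists m, is_mean f m /\ forall x, f (m + x) = f (m - x).

Definition responsiveness (d1 d0 phi : R) : R := (d1 + d0 - 1) * (2 * phi - 1).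

From Stdlib Require Import Reals Lra.
From Coquelicot Require Import Coquelicot.
Open Scope R_scope.

(* Write A := (t - k0) F(k0) and B := (k1 - t)(1 - F(k1)) for the two maximal
   gains; the payoff difference is (t - gmu) + B - A.  Log-concavity of f makes
   F/f nondecreasing, so the first-order conditions defining k0 and k1 describe
   strict global maximisers of z |-> (t - z) F(z) and z |-> (z - t)(1 - F(z)).
   Symmetry about the mean m makes m the median and gives F(2m - z) = 1 - F(z),
   which exchanges the two maximisation problems.  Comparing A and B through
   the test points k0, k1 and their mirror images 2m - k0, 2m - k1 then shows
   that A - B <= t - m when m <= t and A - B > t - m when t < m. *)

Lemma MVT_is_derive (g dg : R -> R) (a b : R) :
  a < b -> (forall x, is_derive g x (dg x)) ->
  exists c, a < c < b /\ g b - g a = dg c * (b - a).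
Proof.
  intros Hab Hg.
  destruct (MVT_cor2 g dg a b Hab) as [c [Hc Hin]].
  - intros c _. apply is_derive_Reals, Hg.
  - exists c. split; assumption.
Qed.

Lemma is_lim_reflect (g : R -> R) (a : R) (l : Rbar) :
  is_lim g m_infty l -> is_lim (fun x => g (a - x)) p_infty l.
Proof.
  intro Hg. apply (is_lim_comp g (fun x => a - x) p_infty l m_infty Hg).
  - eapply is_lim_minus; [apply is_lim_const | apply is_lim_id | reflexivity].
  - exists 0. intros x _. discriminate.
Qed.

Lemma log_concave_ratio (f : R -> R) (u x d : R) :
  log_concave f -> (forall z, 0 < f z) -> u <= x -> 0 <= d ->
  f u * f (x + d) <= f x * f (u + d).
Proof.
  intros Hlc Hpos Hux Hd.
  destruct (Req_dec u x) as [<- | Hne]; [lra |].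
  (* x and u + d are the mirror-image convex combinations of u and x + d *)
  set (l := d / (x - u + d)).
  assert (Hl : 0 <= l <= 1).
  { unfold l. split.
    - apply Rdiv_le_0_compat; lra.
    - apply Rmult_le_reg_r with (x - u + d); [lra |].
      unfold Rdiv. rewrite Rmult_assoc, Rinv_l by lra. lra. }
  pose proof (Hlc u (x + d) l Hl) as Hx.
  pose proof (Hlc u (x + d) (1 - l) ltac:(lra)) as Hud.
  replace (l * u + (1 - l) * (x + d)) with x in Hx by (unfold l; field; lra).
  replace ((1 - l) * u + (1 - (1 - l)) * (x + d)) with (u + d) in Hud
    by (unfold l; field; lra).
  apply Rnot_lt_le. intro Hlt.
  apply ln_increasing in Hlt; [| apply Rmult_lt_0_compat; apply Hpos].
  rewrite !ln_mult in Hlt by apply Hpos. lra.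
Qed.

Section Cdf.

Variables F f : R -> R.
Hypothesis F_derive : forall x, is_derive F x (f x).
Hypothesis f_pos : forall x, 0 < f x.
Hypothesis F_lim_m_infty : is_lim F m_infty 0.
Hypothesis F_lim_p_infty : is_lim F p_infty 1.
Hypothesis f_log_concave : log_concave f.

Lemma F_ex_derive x : ex_derive F x.
Proof. exists (f x). apply F_derive. Qed.

Lemma Derive_F x : Derive F x = f x.
Proof. apply is_derive_unique, F_derive. Qed.

Lemma F_lt x y : x < y -> F x < F y.
Proof.
  intro Hxy. destruct (MVT_is_derive F f x y Hxy F_derive) as [c [_ Hc]].
  pose proof (f_pos c). nra.
Qed.

Lemma reversed_hazard_nonincreasing x y : x <= y -> F x * f y <= F y * f x.
Proof.
  intro Hxy.
  set (H := fun L => f x * F (y - L) - f y * F (x - L)).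
  assert (H_derive : forall L,
            is_derive H L (f y * f (x - L) - f x * f (y - L))).
  { intro L. unfold H. auto_derive.
    - repeat split; apply F_ex_derive.
    - rewrite !Derive_F. unfold Rminus. ring. }
  assert (H_le : forall L, 0 < L -> H L <= H 0).
  { intros L HL.
    destruct (MVT_is_derive H _ 0 L HL H_derive) as [c [Hc Heq]].
    pose proof (log_concave_ratio f (x - c) x (y - x) f_log_concave f_pos
                  ltac:(lra) ltac:(lra)) as Hratio.
    replace (x + (y - x)) with y in Hratio by ring.
    replace (x - c + (y - x)) with (y - c) in Hratio by ring.
    nra. }
  assert (H_lim : is_lim H p_infty (f x * 0 - f y * 0)).
  { apply is_lim_minus'; apply (is_lim_scal_l _ _ _ 0);
      apply is_lim_reflect, F_lim_m_infty. }
  pose proof (is_lim_le_loc H (fun _ => H 0) p_infty _ _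
                ltac:(exists 0; exact H_le) H_lim (is_lim_const (H 0) p_infty))
    as Hle.
  simpl in Hle. unfold H in Hle. rewrite !Rminus_0_r in Hle. lra.
Qed.

Lemma fixed_point_argmax s k :
  k = s - F k / f k -> forall z, z <> k -> (s - z) * F z < (s - k) * F k.
Proof.
  intros Hk z Hz.
  set (g := fun z => (s - z) * F z).
  assert (g_derive : forall z, is_derive g z ((s - z) * f z - F z)).
  { intro x. unfold g. auto_derive.
    - apply F_ex_derive.
    - rewrite Derive_F. ring. }
  assert (Hk' : F k = (s - k) * f k).
  { rewrite Hk at 2. field. apply Rgt_not_eq, f_pos. }
  pose proof (f_pos k).
  (* g' = f (s - z - F / f) vanishes at k, and F / f is nondecreasing. *)
  change (g z < g k).
  destruct (Rdichotomy z k Hz) as [Hlt | Hgt].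
  - destruct (MVT_is_derive g _ z k Hlt g_derive) as [c [Hc Heq]].
    pose proof (reversed_hazard_nonincreasing c k ltac:(lra)) as Hr.
    pose proof (f_pos c).
    assert (F c <= (s - k) * f c).
    { apply Rmult_le_reg_r with (f k); [lra |]. rewrite Hk' in Hr. nra. }
    assert (0 < (s - c) * f c - F c) by nra.
    nra.
  - destruct (MVT_is_derive g _ k z Hgt g_derive) as [c [Hc Heq]].
    pose proof (reversed_hazard_nonincreasing k c ltac:(lra)) as Hr.
    pose proof (f_pos c).
    assert ((s - k) * f c <= F c).
    { apply Rmult_le_reg_r with (f k); [lra |]. rewrite Hk' in Hr. nra. }
    assert ((s - c) * f c - F c < 0) by nra.
    nra.
Qed.

Variable m : R.
Hypothesis f_sym : forall x, f (m + x) = f (m - x).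

Lemma f_reflect x : f (2 * m - x) = f x.
Proof.
  replace (2 * m - x) with (m + (m - x)) by ring.
  rewrite f_sym. f_equal. ring.
Qed.

Lemma F_reflect x : F (2 * m - x) = 1 - F x.
Proof.
  set (K := fun x => F x + F (2 * m - x)).
  assert (K_derive : forall x, is_derive K x 0).
  { intro y. unfold K. auto_derive.
    - repeat split; apply F_ex_derive.
    - rewrite !Derive_F. fold (2 * m - y). rewrite f_reflect. ring. }
  assert (K_const : forall y, K y = K x).
  { intro y. destruct (Rtotal_order y x) as [Hlt | [-> | Hgt]].
    - destruct (MVT_is_derive K _ y x Hlt K_derive) as [c [_ Hc]]. lra.
    - reflexivity.
    - destruct (MVT_is_derive K _ x y Hgt K_derive) as [c [_ Hc]]. lra. }
  assert (K_lim : is_lim (fun _ => K x) p_infty (1 + 0)).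
  { apply is_lim_ext with K; [exact K_const |].
    apply is_lim_plus'; [exact F_lim_p_infty |].
    apply is_lim_reflect, F_lim_m_infty. }
  apply is_lim_unique in K_lim. rewrite Lim_const in K_lim.
  injection K_lim. unfold K. lra.
Qed.

Lemma fixed_point_argmax_upper t k :
  k = t + (1 - F k) / f k ->
  forall z, z <> k -> (z - t) * (1 - F z) < (k - t) * (1 - F k).
Proof.
  intros Hk z Hz.
  assert (Hk' : 2 * m - k = (2 * m - t) - F (2 * m - k) / f (2 * m - k)).
  { rewrite F_reflect, f_reflect. lra. }
  pose proof (fixed_point_argmax (2 * m - t) (2 * m - k) Hk' (2 * m - z)
                ltac:(lra)) as H.
  rewrite !F_reflect in H.
  replace (2 * m - t - (2 * m - z)) with (z - t) in H by ring.
  replace (2 * m - t - (2 * m - k)) with (k - t) in H by ring.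
  exact H.
Qed.

End Cdf.

Section PayoffGap.

Variable F : R -> R.
Variables m t k0 k1 : R.
Hypothesis F_lt : forall x y, x < y -> F x < F y.
Hypothesis F_reflect : forall x, F (2 * m - x) = 1 - F x.
Hypothesis argmax0 : forall k, k <> k0 -> (t - k) * F k < (t - k0) * F k0.
Hypothesis argmax1 :
  forall k, k <> k1 -> (k - t) * (1 - F k) < (k1 - t) * (1 - F k1).
Hypothesis k0_neq_k1 : k0 <> k1.

Let gain0 := (t - k0) * F k0.
Let gain1 := (k1 - t) * (1 - F k1).

Lemma argmax0_le k : (t - k) * F k <= gain0.
Proof.
  destruct (Req_dec k k0) as [-> | Hk]; [apply Rle_refl |].
  left. apply argmax0, Hk.
Qed.

Lemma argmax1_le k : (k - t) * (1 - F k) <= gain1.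
Proof.
  destruct (Req_dec k k1) as [-> | Hk]; [apply Rle_refl |].
  left. apply argmax1, Hk.
Qed.

Lemma F_center : F m = 1 / 2.
Proof.
  pose proof (F_reflect m) as H.
  replace (2 * m - m) with m in H by ring. lra.
Qed.

Lemma payoff_gap_le : m <= t -> gain0 - gain1 <= t - m.
Proof.
  intro Hmt. pose proof F_center as Hm.
  destruct (Rle_or_lt m k0) as [Hk0 | Hk0].
  - pose proof (argmax1 k0 k0_neq_k1). unfold gain0, gain1 in *. nra.
  - pose proof (argmax1_le (2 * m - k0)) as H.
    rewrite F_reflect in H.
    assert (F k0 < 1 / 2) by (rewrite <- Hm; apply F_lt, Hk0).
    unfold gain0, gain1 in *. nra.
Qed.

Lemma payoff_gap_gt : t < m -> t - m < gain0 - gain1.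
Proof.
  intro Htm. pose proof F_center as Hm.
  destruct (Rle_or_lt k1 m) as [Hk1 | Hk1].
  - pose proof (argmax0 k1 (not_eq_sym k0_neq_k1)). unfold gain0, gain1 in *. nra.
  - pose proof (argmax0_le (2 * m - k1)) as H.
    rewrite F_reflect in H.
    assert (1 / 2 < F k1) by (rewrite <- Hm; apply F_lt, Hk1).
    unfold gain0, gain1 in *. nra.
Qed.

End PayoffGap.

Theorem proposition9
  (F f : R -> R) (t gmu d1 d0 phi k0 k1 : R)
  (HF : is_cdf_with_density F f)
  (Hlc : log_concave f)
  (Hsym : symmetric_about_mean f)
  (Hmed : F gmu = 1 / 2)
  (Ht : 0 <= t)
  (Hd1 : 0 <= d1 <= 1) (Hd0 : 0 <= d0 <= 1)
  (Hphi : 1 / 2 < phi <= 1)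
  (Hnonnull : responsiveness d1 d0 phi <> 0)
  (Hk0 : k0 = t - F k0 / f k0)
  (Hk1 : k1 = t + (1 - F k1) / f k1) :
  (- gmu + k1 * (1 - F k1) + t * F k1 >= - k0 * F k0 + t * F k0)
  <-> gmu <= t.
Proof.
  destruct HF as (F_derive & _ & f_pos & _ & F_lim_m & F_lim_p).
  destruct Hsym as (m & _ & f_sym).
  pose proof (F_lt F f F_derive f_pos) as HFlt.
  pose proof (F_reflect F f F_derive F_lim_m F_lim_p m f_sym) as Hrefl.
  assert (Hgmu : gmu = m).
  { pose proof (F_center F m Hrefl).
    destruct (Rtotal_order gmu m) as [Hlt | [Heq | Hgt]];
      [apply HFlt in Hlt; lra | exact Heq | apply HFlt in Hgt; lra]. }
  subst gmu.
  assert (Hne : k0 <> k1).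
  { intro E. subst k1. pose proof (f_pos k0).
    assert (F k0 / f k0 + (1 - F k0) / f k0 = / f k0) by (field; lra).
    pose proof (Rinv_0_lt_compat (f k0) ltac:(lra)). lra. }
  pose proof (fixed_point_argmax F f F_derive f_pos F_lim_m Hlc t k0 Hk0) as Hmax0.
  pose proof (fixed_point_argmax_upper F f F_derive f_pos F_lim_m F_lim_p
                Hlc m f_sym t k1 Hk1) as Hmax1.
  pose proof (payoff_gap_le F m t k0 k1 HFlt Hrefl Hmax1 Hne) as Hle.
  pose proof (payoff_gap_gt F m t k0 k1 HFlt Hrefl Hmax0 Hne) as Hgt.
  assert (Hdiff : (- m + k1 * (1 - F k1) + t * F k1) - (- k0 * F k0 + t * F k0)
                  = (t - m) + (k1 - t) * (1 - F k1) - (t - k0) * F k0) by ring.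
  split; intro H.
  - destruct (Rle_or_lt m t) as [| Hlt]; [assumption |].
    specialize (Hgt Hlt). lra.
  - specialize (Hle H). lra.
Qed.
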